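(* Assume: (a) $\mu>\mathrm{cf}(\mu)=\theta$, $\kappa=\mu^+$, $2^\theta<\kappa$; (b) $\mathcal{A}=\{A_\alpha:\alpha\in\kappa\}$ is $\mu$-scattered, i.e. each $A_\alpha\subseteq\mu$ has $|A_\alpha|=\theta$, and whenever $I\in[\kappa]^\kappa$ and $a_\alpha\subseteq A_\alpha$ with $|a_\alpha|=\theta$ for $\alpha\in I$, then $|\bigcup\{a_\alpha:\alpha\in I\}|=\mu$; (c) $\chi<\theta$ and $\binom{\theta^+}{\theta}\rightarrow\binom{\theta}{\theta}_\chi$. Then $\binom{\mu}{\theta^+}\rightarrow\binom{\mu}{\theta}_\chi$. If one assumes the stronger $\binom{\theta^+}{\theta}\rightarrow\binom{\theta^+}{\theta}_\chi$ and $2^{\theta^+}<\kappa$, then $\binom{\mu}{\theta^+}\rightarrow\binom{\mu}{\theta^+}_\chi$.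
   Context: Notation: $\binom{\lambda}{\kappa}\rightarrow\binom{\alpha}{\beta}_\chi$ means that for every coloring $c:\lambda\times\kappa\rightarrow\chi$ there are $A\subseteq\lambda$, $B\subseteq\kappa$ with $\mathrm{otp}(A)=\alpha$, $\mathrm{otp}(B)=\beta$ and $c\upharpoonright(A\times B)$ constant. *)

Definition all (X : Type) : X -> Prop := fun _ => True.

Definition card_le {X Y : Type} (A : X -> Prop) (B : Y -> Prop) : Prop :=
  exists f : X -> Y, (forall x, A x -> B (f x)) /\
    (forall x y, A x -> A y -> f x = f y -> x = y).

Definition card_lt {X Y : Type} (A : X -> Prop) (B : Y -> Prop) : Prop :=
  card_le A B /\ ~ card_le B A.

Definition equipotent {X Y : Type} (A : X -> Prop) (B : Y -> Prop) : Prop :=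
  exists f : X -> Y, (forall x, A x -> B (f x)) /\
    (forall x y, A x -> A y -> f x = f y -> x = y) /\
    (forall y, B y -> exists x, A x /\ f x = y).

(* A (strict) well-ordered type, i.e. (a representative of) an ordinal. *)
Record WO := {
  wo_car :> Type;
  wo_lt : wo_car -> wo_car -> Prop;
  wo_irrefl : forall x, ~ wo_lt x x;
  wo_trans : forall x y z, wo_lt x y -> wo_lt y z -> wo_lt x z;
  wo_total : forall x y, wo_lt x y \/ x = y \/ wo_lt y x;
  wo_wf : well_founded wo_lt
}.

Arguments wo_lt {w} _ _.

Definition below {X : WO} (x : X) : X -> Prop := fun y => wo_lt y x.

Definition is_cardinal (X : WO) : Prop :=
  forall x : X, card_lt (below x) (all X).

Definition otp_eq (X : WO) (A : X -> Prop) (Y : WO) : Prop :=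
  exists f : X -> Y,
    (forall x y, A x -> A y -> wo_lt x y -> wo_lt (f x) (f y)) /\
    (forall y : Y, exists x, A x /\ f x = y).

Definition otp_le (Y : WO) (X : WO) (C : X -> Prop) : Prop :=
  exists f : Y -> X, (forall y, C (f y)) /\
    (forall y y', wo_lt y y' -> wo_lt (f y) (f y')).

Definition cofinal (X : WO) (C : X -> Prop) : Prop :=
  forall x : X, exists y, C y /\ ~ wo_lt y x.

Definition is_cf (M T : WO) : Prop :=
  (exists C : M -> Prop, cofinal M C /\ otp_eq M C T) /\
  (forall C : M -> Prop, cofinal M C -> otp_le T M C).

Definition is_succ_card (M K : WO) : Prop :=
  card_lt (all M) (all K) /\ forall k : K, card_le (below k) (all M).

(* Polarized partition relation  (L over K) -> (Al over Be)_C *)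
Definition polarized (L K Al Be : WO) (C : Type) : Prop :=
  forall c : L -> K -> C,
    exists (A : L -> Prop) (B : K -> Prop),
      otp_eq L A Al /\ otp_eq K B Be /\
      (forall x y x' y', A x -> B y -> A x' -> B y' -> c x y = c x' y').

Definition scattered (M T K : WO) (A : K -> M -> Prop) : Prop :=
  (forall al : K, equipotent (A al) (all T)) /\
  (forall (I : K -> Prop) (a : K -> M -> Prop),
     equipotent I (all K) ->
     (forall al, I al -> (forall x, a al x -> A al x) /\ equipotent (a al) (all T)) ->
     equipotent (fun x => exists al, I al /\ a al x) (all M)).

From Stdlib Require Import Classical ClassicalEpsilon FunctionalExtensionality PropExtensionality.
From Stdlib Require Import Lia Cantor Inverse_Image.

(* Fix a colouring c of mu * theta^+.  Through a bijection A_alpha ~ theta each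
   column A_alpha yields a colouring of theta^+ * theta, and (c) gives a homogeneous
   rectangle a_alpha * B_alpha, with a_alpha a subset of A_alpha of size theta, of
   colour j_alpha.  Pigeonholing over kappa = mu^+ leaves kappa many alpha with the
   same B and the same colour, as there are fewer than kappa candidates for B:
   directly when 2^(theta^+) < kappa, and, when B has order type theta, because B
   is then bounded in the regular cardinal theta^+ and so is coded by a subset of
   theta.  By scatteredness the union of these a_alpha has size mu, hence order
   type mu, and it forms a homogeneous rectangle with B. *)

Lemma card_le_trans {X Y Z : Type} (A : X -> Prop) (B : Y -> Prop) (C : Z -> Prop) :
  card_le A B -> card_le B C -> card_le A C.
Proof.
  intros [f [Hf1 Hf2]] [g [Hg1 Hg2]]. exists (fun x => g (f x)). split; auto.
Qed.

Lemma card_le_subset {X : Type} (A B : X -> Prop) : (forall x, A x -> B x) -> card_le A B.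
Proof. intros H. exists (fun x => x). split; auto. Qed.

Lemma card_le_all {X : Type} (A : X -> Prop) : card_le A (all X).
Proof. apply card_le_subset. intros; exact I. Qed.

Lemma equipotent_refl {X : Type} (A : X -> Prop) : equipotent A A.
Proof. exists (fun x => x). split; [|split]; eauto. Qed.

Lemma equipotent_card_le {X Y : Type} (A : X -> Prop) (B : Y -> Prop) :
  equipotent A B -> card_le A B.
Proof. intros [f [H1 [H2 _]]]. exists f; auto. Qed.

Lemma equipotent_trans {X Y Z : Type} (A : X -> Prop) (B : Y -> Prop) (C : Z -> Prop) :
  equipotent A B -> equipotent B C -> equipotent A C.
Proof.
  intros [f [F1 [F2 F3]]] [g [G1 [G2 G3]]]. exists (fun x => g (f x)). split; [|split]; auto.
  intros z Hz. destruct (G3 z Hz) as [y [Hy <-]]. destruct (F3 y Hy) as [x [Hx <-]]. eauto.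
Qed.

Lemma equipotent_inhabited {X Y : Type} (A : X -> Prop) (y : Y) :
  equipotent A (all Y) -> exists x, A x.
Proof. intros [f [_ [_ H]]]. destruct (H y I) as [x [Hx _]]. eauto. Qed.

(* The inhabitant [x0] is needed: [card_le] asks for a total function [Y -> X]. *)
Lemma card_le_of_surj {X Y : Type} (x0 : X) (A : X -> Prop) (B : Y -> Prop) (f : X -> Y) :
  (forall y, B y -> exists x, A x /\ f x = y) -> card_le B A.
Proof.
  intros H.
  assert (H' : forall y, exists x, B y -> A x /\ f x = y).
  { intros y. destruct (classic (B y)) as [Hy|Hy].
    - destruct (H y Hy) as [x Hx]. eauto.
    - exists x0; tauto. }
  destruct (choice _ H') as [g Hg].
  exists g. split.
  - intros y Hy. apply (Hg y Hy).
  - intros y y' Hy Hy' E.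
    rewrite <- (proj2 (Hg y Hy)), <- (proj2 (Hg y' Hy')), E. reflexivity.
Qed.

Lemma equipotent_card_ge {X Y : Type} (x0 : X) (A : X -> Prop) (B : Y -> Prop) :
  equipotent A B -> card_le B A.
Proof. intros [f [_ [_ H]]]. exact (card_le_of_surj x0 A B f H). Qed.

Lemma inhabited_of_not_card_le {X Y : Type} : ~ card_le (all X) (all Y) -> exists x : X, True.
Proof.
  intros H. apply NNPP. intros N. apply H.
  exists (fun x => False_rect Y (N (ex_intro _ x I))).
  split; intros x; destruct (N (ex_intro _ x I)).
Qed.

Lemma two_points_of_card_lt {X Y : Type} (x0 : X) :
  card_lt (all X) (all Y) -> exists y1 y2 : Y, y1 <> y2.
Proof.
  intros [_ HYX]. apply NNPP. intros N. apply HYX.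
  exists (fun _ => x0). split; [intros; exact I|].
  intros y1 y2 _ _ _. apply NNPP. intros E. apply N. eauto.
Qed.

Definition setX {X Y : Type} (A : X -> Prop) (B : Y -> Prop) : X * Y -> Prop :=
  fun p => A (fst p) /\ B (snd p).

Lemma card_le_setX {X Y X' Y' : Type} (A : X -> Prop) (B : Y -> Prop)
  (A' : X' -> Prop) (B' : Y' -> Prop) :
  card_le A A' -> card_le B B' -> card_le (setX A B) (setX A' B').
Proof.
  intros [f [F1 F2]] [g [G1 G2]]. exists (fun p => (f (fst p), g (snd p))). split.
  - intros [x y] [H1 H2]. split; simpl in *; auto.
  - intros [x y] [x' y'] [H1 H2] [H1' H2'] E. simpl in *. injection E as E1 E2.
    f_equal; auto.
Qed.

Lemma card_le_powerset_bool (X : Type) : card_le (all (X -> Prop)) (all (X -> bool)).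
Proof.
  exists (fun P t => if excluded_middle_informative (P t) then true else false).
  split; [intros; exact I|].
  intros P Q _ _ E. apply functional_extensionality. intros t.
  apply propositional_extensionality.
  pose proof (f_equal (fun h => h t) E) as Et. simpl in Et.
  destruct (excluded_middle_informative (P t)), (excluded_middle_informative (Q t));
    try discriminate; tauto.
Qed.

Lemma strict_mono_inj (X Y : WO) (A : X -> Prop) (f : X -> Y) :
  (forall x y, A x -> A y -> wo_lt x y -> wo_lt (f x) (f y)) ->
  forall x y, A x -> A y -> f x = f y -> x = y.
Proof.
  intros H x y Hx Hy E. destruct (wo_total X x y) as [L|[L|L]]; auto;
    apply H in L; auto; rewrite E in L; destruct (wo_irrefl _ _ L).
Qed.

Lemma otp_eq_equipotent (X Y : WO) (A : X -> Prop) : otp_eq X A Y -> equipotent A (all Y).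
Proof.
  intros [f [H1 H2]]. exists f. split; [|split].
  - intros; exact I.
  - exact (strict_mono_inj X Y A f H1).
  - intros y _. apply H2.
Qed.

Definition least_in {W : WO} (P : W -> Prop) (w : W) : Prop :=
  P w /\ forall w', P w' -> ~ wo_lt w' w.

Lemma least_in_exists (W : WO) (P : W -> Prop) : (exists w, P w) -> exists w, least_in P w.
Proof.
  intros [w Hw]. revert Hw. induction w as [w IH] using (well_founded_ind (wo_wf W)).
  intros Hw. destruct (classic (exists w', P w' /\ wo_lt w' w)) as [[w' [Hw' L]]|N].
  - exact (IH w' L Hw').
  - exists w. split; auto. intros w' Hw' L. apply N. eauto.
Qed.

Lemma wo_le_lt_trans (W : WO) (x y z : W) : ~ wo_lt y x -> wo_lt y z -> wo_lt x z.
Proof.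
  intros H L. destruct (wo_total W x y) as [L'|[<-|L']]; auto.
  - exact (wo_trans _ _ _ _ L' L).
  - contradiction.
Qed.

Lemma wo_lt_le_trans (W : WO) (x y z : W) : wo_lt x y -> ~ wo_lt z y -> wo_lt x z.
Proof.
  intros L H. destruct (wo_total W y z) as [L'|[<-|L']]; auto.
  - exact (wo_trans _ _ _ _ L L').
  - contradiction.
Qed.

Section Comparison.

Variables (X Y : WO) (U : X -> Prop) (V : Y -> Prop) (y0 : Y).

(* Transfinite enumeration of [V] along [U]: [enum x] is the least element of [V]
   above all [enum x'] with [x' < x] in [U]. *)
Definition enum_step (x : X) (rec : forall x', wo_lt x' x -> Y) : Y :=
  epsilon (inhabits y0)
    (least_in (fun y => V y /\ forall x' (h : wo_lt x' x), U x' -> wo_lt (rec x' h) y)).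

Definition enum : X -> Y := Fix (wo_wf X) (fun _ => Y) enum_step.

Definition enum_bound (x : X) (y : Y) : Prop :=
  V y /\ forall x', wo_lt x' x -> U x' -> wo_lt (enum x') y.

Definition enum_dom (x : X) : Prop := U x /\ exists y, enum_bound x y.

Lemma enum_least x : (exists y, enum_bound x y) -> least_in (enum_bound x) (enum x).
Proof.
  intros Hx.
  assert (E : enum x = epsilon (inhabits y0) (least_in (enum_bound x))).
  { unfold enum at 1. rewrite Fix_eq; [reflexivity|].
    intros z f g Hfg. replace g with f; [reflexivity|].
    apply functional_extensionality_dep; intros a.
    apply functional_extensionality_dep; intros b. apply Hfg. }
  rewrite E. apply epsilon_spec. exact (least_in_exists Y _ Hx).
Qed.

Lemma enum_dom_down x x' : enum_dom x -> U x' -> wo_lt x' x -> enum_dom x'.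
Proof.
  intros [Ux Hx] Ux' L. split; auto. exists (enum x).
  destruct (enum_least x Hx) as [[Vx Bx] _]. split; auto.
  intros x'' L'' U''. apply Bx; auto. exact (wo_trans _ _ _ _ L'' L).
Qed.

Lemma enum_mono x x' : enum_dom x -> enum_dom x' -> wo_lt x x' -> wo_lt (enum x) (enum x').
Proof.
  intros [Ux _] [_ Hx'] L. apply (proj2 (proj1 (enum_least x' Hx'))); auto.
Qed.

Lemma enum_not_bound x y :
  V y -> ~ enum_bound x y -> exists x', wo_lt x' x /\ U x' /\ ~ wo_lt (enum x') y.
Proof.
  intros Vy By. apply NNPP. intros N. apply By. split; auto.
  intros x' L U'. apply NNPP. intros N'. apply N. eauto.
Qed.

Lemma enum_image_down x y :
  enum_dom x -> V y -> wo_lt y (enum x) -> exists x', enum_dom x' /\ enum x' = y.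
Proof.
  induction x as [x IH] using (well_founded_ind (wo_wf X)).
  intros Dx Vy Ly. destruct Dx as [Ux Hx].
  destruct (classic (enum_bound x y)) as [By|By].
  { destruct (proj2 (enum_least x Hx) y By Ly). }
  destruct (enum_not_bound x y Vy By) as [x' [L [Ux' N]]].
  assert (Dx' : enum_dom x') by (apply (enum_dom_down x); [split|..]; auto).
  destruct (wo_total Y y (enum x')) as [L'|[E|L']].
  - exact (IH x' L Dx' Vy L').
  - eauto.
  - contradiction.
Qed.

Lemma enum_onto_below u :
  U u -> ~ enum_dom u -> (forall x, wo_lt x u -> U x -> enum_dom x) ->
  card_le V (fun z => U z /\ wo_lt z u).
Proof.
  intros Uu Nu Hdom.
  apply (card_le_of_surj u _ V enum). intros y Vy.
  assert (By : ~ enum_bound u y) by (intros By; apply Nu; split; eauto).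
  destruct (enum_not_bound u y Vy By) as [x [L [Ux N]]].
  destruct (wo_total Y y (enum x)) as [L'|[E|L']]; [|eauto|contradiction].
  destruct (enum_image_down x y (Hdom x L Ux) Vy L') as [x' [Dx' E]].
  exists x'. split; auto. split; [apply Dx'|].
  destruct (wo_total X x' x) as [L''|[->|L'']].
  - exact (wo_trans _ _ _ _ L'' L).
  - exact L.
  - pose proof (enum_mono x x' (Hdom x L Ux) Dx' L'') as Lm. rewrite E in Lm.
    destruct (wo_irrefl _ _ (wo_trans _ _ _ _ Lm L')).
Qed.

Theorem wo_compare :
  (exists f : X -> Y, (forall x, U x -> V (f x)) /\
     (forall x x', U x -> U x' -> wo_lt x x' -> wo_lt (f x) (f x')) /\
     (forall y, V y -> exists x, U x /\ f x = y)) \/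
  (exists y, V y /\ card_le U (fun z => V z /\ wo_lt z y)) \/
  (exists x, U x /\ card_le V (fun z => U z /\ wo_lt z x)).
Proof.
  destruct (classic (forall x, U x -> enum_dom x)) as [Hall|Hall].
  - assert (Hmono : forall x x', U x -> U x' -> wo_lt x x' -> wo_lt (enum x) (enum x')).
    { intros x x' Ux Ux'. apply enum_mono; auto. }
    assert (HV : forall x, U x -> V (enum x)).
    { intros x Ux. destruct (Hall x Ux) as [_ Hx]. exact (proj1 (proj1 (enum_least x Hx))). }
    destruct (classic (forall y, V y -> exists x, U x /\ enum x = y)) as [Hon|Hon].
    + left. exists enum. auto.
    + right; left. apply not_all_ex_not in Hon. destruct Hon as [y Hy].
      apply imply_to_and in Hy. destruct Hy as [Vy Hy].
      exists y. split; auto. exists enum. split; [|exact (strict_mono_inj X Y U enum Hmono)].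
      intros x Ux. split; auto.
      destruct (wo_total Y (enum x) y) as [L|[E|L]]; auto; exfalso; apply Hy.
      * eauto.
      * destruct (enum_image_down x y (Hall x Ux) Vy L) as [x' [[Ux' _] E]]. eauto.
  - right; right. apply not_all_ex_not in Hall. destruct Hall as [u Hu].
    apply imply_to_and in Hu.
    destruct (least_in_exists X (fun x => U x /\ ~ enum_dom x) (ex_intro _ u Hu))
      as [u' [[Uu Nu] Hmin]].
    exists u'. split; auto. apply enum_onto_below; auto.
    intros x L Ux. apply NNPP. intros N. exact (Hmin x (conj Ux N) L).
Qed.

End Comparison.

Lemma otp_eq_of_card_ge (M : WO) (U : M -> Prop) :
  is_cardinal M -> card_le (all M) U -> otp_eq M U M.
Proof.
  intros HM HU.
  destruct (classic (exists m : M, True)) as [[m0 _]|NE].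
  2:{ exists (fun x => x). split; auto. intros m. destruct NE. eauto. }
  destruct (wo_compare M M U (all M) m0) as [[f [_ [Hf Hon]]]|[[m [_ Hm]]|[m [_ Hm]]]].
  - exists f. split; auto. intros m. destruct (Hon m I) as [x Hx]. eauto.
  - destruct (proj2 (HM m)). apply (card_le_trans _ U); auto.
    apply (card_le_trans _ _ _ Hm). apply card_le_subset. intros x []; auto.
  - destruct (proj2 (HM m)). apply (card_le_trans _ _ _ Hm).
    apply card_le_subset. intros x []; auto.
Qed.

Lemma equipotent_or_card_le_of_segments (Y : WO) (U : Y -> Prop) (Z : Type) (B : Z -> Prop) :
  (forall y : Y, card_le (below y) B) -> equipotent U (all Y) \/ card_le U B.
Proof.
  intros Hseg.
  destruct (classic (exists y : Y, True)) as [[y0 _]|NE].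
  2:{ left. exists (fun y => y). split; [|split]; auto.
      - intros; exact I.
      - intros y. destruct NE. eauto. }
  destruct (wo_compare Y Y U (all Y) y0) as [[f [_ [Hf Hon]]]|[[y [_ Hy]]|[y [_ Hy]]]].
  - left. exists f. split; [|split]; auto.
    + intros; exact I.
    + exact (strict_mono_inj Y Y U f Hf).
  - right. apply (card_le_trans _ _ _ Hy). apply (card_le_trans _ (below y)); auto.
    apply card_le_subset. intros x []; auto.
  - right. apply (card_le_trans _ (all Y)); [apply card_le_all|].
    apply (card_le_trans _ _ _ Hy). apply (card_le_trans _ (below y)); auto.
    apply card_le_subset. intros x []; auto.
Qed.

Lemma card_le_or_segment_ge (X Y : WO) (y0 : Y) :
  card_le (all X) (all Y) \/ exists x : X, card_le (all Y) (below x).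
Proof.
  destruct (wo_compare X Y (all X) (all Y) y0)
    as [[f [_ [Hf _]]]|[[y [_ Hy]]|[x [_ Hx]]]].
  - left. exists f. split; [intros; exact I|]. exact (strict_mono_inj X Y _ f Hf).
  - left. apply (card_le_trans _ _ _ Hy). apply card_le_all.
  - right. exists x. apply (card_le_trans _ _ _ Hx). apply card_le_subset. intros z []; auto.
Qed.

Definition nat_wo : WO.
Proof.
  refine {| wo_car := nat; wo_lt := lt |}.
  - intros x; lia.
  - intros; lia.
  - intros x y; lia.
  - exact PeanoNat.Nat.lt_wf_0.
Defined.

Lemma card_le_nat_or_nat_le (W : WO) (S : W -> Prop) :
  card_le S (all nat) \/ card_le (all nat) S.
Proof.
  destruct (wo_compare W nat_wo S (all nat) 0)
    as [[f [_ [Hf _]]]|[[n [_ Hn]]|[w [_ Hw]]]].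
  - left. exists f. split; [intros; exact I|]. exact (strict_mono_inj W nat_wo S f Hf).
  - left. apply (card_le_trans _ _ _ Hn). apply card_le_all.
  - right. apply (card_le_trans _ _ _ Hw). apply card_le_subset. intros x []; auto.
Qed.

Lemma nat_le_of_no_max (W : WO) (w0 : W) :
  (forall w : W, exists w', wo_lt w w') -> card_le (all nat) (all W).
Proof.
  intros H. destruct (choice _ H) as [next Hnext].
  pose (e := fix e n := match n with 0 => w0 | S n => next (e n) end).
  exists e. split; [intros; exact I|].
  apply (strict_mono_inj nat_wo W (all nat) e). intros n m _ _ L. induction L.
  - apply Hnext.
  - exact (wo_trans _ _ _ _ IHL (Hnext _)).
Qed.

(* The shift [e n |-> e (S n)] misses [e 0]. *)
Lemma card_le_drop_seq_head {X : Type} (A : X -> Prop) (e : nat -> X) :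
  (forall n, A (e n)) -> (forall n k, e n = e k -> n = k) ->
  card_le A (fun x => A x /\ x <> e 0).
Proof.
  intros HA Einj.
  pose (h := fun x => match excluded_middle_informative (exists n, e n = x) with
                      | left H => e (S (proj1_sig (constructive_indefinite_description _ H)))
                      | right _ => x end).
  assert (Hh : forall x, (exists n, e n = x /\ h x = e (S n)) \/
                         ((forall n, e n <> x) /\ h x = x)).
  { intros x. unfold h. destruct (excluded_middle_informative _) as [H|H].
    - left. destruct (constructive_indefinite_description _ H) as [n Hn]. eauto.
    - right. split; auto. intros n E. apply H; eauto. }
  exists h. split.
  - intros x Ax. destruct (Hh x) as [[n [_ ->]]|[N ->]]; split; auto.
    intros E. apply Einj in E. discriminate.
  - intros x y _ _ E.
    destruct (Hh x) as [[n [<- Hx]]|[Nx Hx]], (Hh y) as [[k [<- Hy]]|[Ny Hy]];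
      rewrite Hx, Hy in E.
    + apply Einj in E. injection E as ->. reflexivity.
    + destruct (Ny (S n) E).
    + destruct (Nx (S k) (eq_sym E)).
    + exact E.
Qed.

Lemma card_le_swap_removed {X : Type} (S : X -> Prop) (a b : X) :
  S a -> card_le (fun x => S x /\ x <> a) (fun x => S x /\ x <> b).
Proof.
  intros Sa.
  exists (fun x => if excluded_middle_informative (x = b) then a else x). split.
  - intros x [Sx Nx]. destruct (excluded_middle_informative (x = b)) as [->|N]; auto.
  - intros x y [_ Nx] [_ Ny].
    destruct (excluded_middle_informative (x = b)), (excluded_middle_informative (y = b));
      congruence.
Qed.

Lemma card_le_remove_point {X : Type} (S : X -> Prop) (m : X) :
  card_le (all nat) S -> S m -> card_le S (fun x => S x /\ x <> m).
Proof.
  intros [e [He Einj]] Sm.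
  apply (card_le_trans _ (fun x => S x /\ x <> e 0)).
  - apply card_le_drop_seq_head; intros; [apply He | apply Einj]; auto; exact I.
  - apply card_le_swap_removed. apply He. exact I.
Qed.

Lemma card_le_below_max (W : WO) (S : W -> Prop) (m : W) :
  card_le (all nat) S -> S m -> (forall x, S x -> ~ wo_lt m x) -> card_le S (below m).
Proof.
  intros Hn Sm Hmax. apply (card_le_trans _ _ _ (card_le_remove_point S m Hn Sm)).
  apply card_le_subset. intros x [Sx Nx].
  destruct (wo_total W x m) as [L|[E|L]]; [exact L|contradiction|destruct (Hmax x Sx L)].
Qed.

Lemma card_le_setX_nat {X : Type} (S : X -> Prop) :
  card_le S (all nat) -> card_le (setX S S) (all nat).
Proof.
  intros H. apply (card_le_trans _ _ _ (card_le_setX S S _ _ H H)).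
  exists Cantor.to_nat. split; [intros; exact I|].
  intros p q _ _ E.
  rewrite <- (Cantor.cancel_of_to p), <- (Cantor.cancel_of_to q), E. reflexivity.
Qed.

Definition lex_wo (A B : WO) : WO.
Proof.
  refine {| wo_car := (A * B)%type;
            wo_lt := fun p q => wo_lt (fst p) (fst q) \/
                                (fst p = fst q /\ wo_lt (snd p) (snd q)) |}.
  - intros [a b] [L|[_ L]]; exact (wo_irrefl _ _ L).
  - intros [a b] [c d] [e f]; simpl.
    intros [L1|[-> L1]] [L2|[-> L2]]; eauto using wo_trans.
  - intros [a b] [c d]; simpl.
    destruct (wo_total A a c) as [L|[->|L]]; auto.
    destruct (wo_total B b d) as [L|[->|L]]; auto.
  - intros [a b]. revert b.
    induction a as [a IHa] using (well_founded_ind (wo_wf A)).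
    intros b. induction b as [b IHb] using (well_founded_ind (wo_wf B)).
    constructor. intros [c d] [L|[E L]]; simpl in *.
    + apply IHa; exact L.
    + subst c. apply IHb; exact L.
Defined.

Definition pullback_wo (A : Type) (B : WO) (g : A -> B)
  (Hg : forall a a', g a = g a' -> a = a') : WO.
Proof.
  refine {| wo_car := A; wo_lt := fun a a' => wo_lt (g a) (g a') |}.
  - intros a. apply wo_irrefl.
  - intros a b c. apply wo_trans.
  - intros a a'. destruct (wo_total B (g a) (g a')) as [L|[E|L]]; auto.
  - apply wf_inverse_image, wo_wf.
Defined.

Definition wmax {W : WO} (a b : W) : W :=
  if excluded_middle_informative (wo_lt a b) then b else a.

Lemma wmax_cases {W : WO} (a b : W) : wmax a b = a \/ wmax a b = b.
Proof. unfold wmax. destruct (excluded_middle_informative _); auto. Qed.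

Lemma wmax_ge_l {W : WO} (a b : W) : ~ wo_lt (wmax a b) a.
Proof.
  unfold wmax. destruct (excluded_middle_informative _) as [L|L].
  - intros L'. exact (wo_irrefl _ _ (wo_trans _ _ _ _ L L')).
  - apply wo_irrefl.
Qed.

Lemma wmax_ge_r {W : WO} (a b : W) : ~ wo_lt (wmax a b) b.
Proof.
  unfold wmax. destruct (excluded_middle_informative _) as [L|L].
  - apply wo_irrefl.
  - intros L'. destruct (wo_total W a b) as [L''|[->|L'']].
    + contradiction.
    + exact (wo_irrefl _ _ L').
    + exact (wo_irrefl _ _ (wo_trans _ _ _ _ L' L'')).
Qed.

(* Pairs ordered by their maximum first, then lexicographically: every proper
   initial segment lies in a square [below v * below v]. *)
Definition pair_wo (W : WO) : WO :=
  pullback_wo (W * W) (lex_wo W (lex_wo W W)) (fun p => (wmax (fst p) (snd p), p))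
    (fun p q E => f_equal snd E).

Lemma pair_lt_square (W : WO) (p q : pair_wo W) (v : W) :
  wo_lt q p -> wo_lt (wmax (fst p) (snd p)) v -> wo_lt (fst q) v /\ wo_lt (snd q) v.
Proof.
  intros Lq Lv.
  assert (Hq : wo_lt (wmax (fst q) (snd q)) v).
  { destruct Lq as [L|[E _]]; simpl in *.
    - exact (wo_trans _ _ _ _ L Lv).
    - rewrite E. exact Lv. }
  split.
  - exact (wo_le_lt_trans _ _ _ _ (wmax_ge_l _ _) Hq).
  - exact (wo_le_lt_trans _ _ _ _ (wmax_ge_r _ _) Hq).
Qed.

Definition square_small {W : WO} (S : W -> Prop) : Prop :=
  card_le (setX S S) S \/ card_le (setX S S) (all nat).

(* If [S] is uncountable and no smaller than its proper segments, comparing the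
   pair order on [S * S] with [S] leaves only [|S * S| <= |S|]: otherwise [S]
   would embed into some [below v * below v], which the induction hypothesis
   makes smaller than [S]. *)
Lemma square_small_step (W : WO) (S : W -> Prop) :
  (forall x y, S x -> wo_lt y x -> S y) ->
  (forall v, S v -> square_small (below v)) -> square_small S.
Proof.
  intros Hdown IH.
  destruct (classic (card_le S (all nat))) as [Hc|Hc].
  { right. exact (card_le_setX_nat S Hc). }
  destruct (classic (exists v, S v /\ card_le S (below v))) as [[v [Sv Hv]]|Hseg].
  { assert (Hsq : card_le (setX S S) (setX (below v) (below v))) by
      exact (card_le_setX _ _ _ _ Hv Hv).
    destruct (IH v Sv) as [H|H]; [left|right]; apply (card_le_trans _ _ _ Hsq);
      [|exact H].
    apply (card_le_trans _ _ _ H). apply card_le_subset. intros y Ly. exact (Hdown v y Sv Ly). }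
  assert (Hinf : card_le (all nat) S).
  { destruct (card_le_nat_or_nat_le W S) as [H|H]; [contradiction|exact H]. }
  assert (Hnomax : forall m, S m -> exists v, S v /\ wo_lt m v).
  { intros m Sm. apply NNPP. intros N. apply Hseg. exists m. split; auto.
    apply card_le_below_max; auto. intros x Sx L. apply N. eauto. }
  assert (Hsmall : forall v, S v -> ~ card_le S (setX (below v) (below v))).
  { intros v Sv Hv. destruct (IH v Sv) as [H|H].
    - apply Hseg. exists v. split; auto. exact (card_le_trans _ _ _ Hv H).
    - apply Hc. exact (card_le_trans _ _ _ Hv H). }
  destruct Hinf as [e [He _]].
  destruct (wo_compare (pair_wo W) W (setX S S) S (e 0))
    as [[f [Hf [Hmono _]]]|[[y [_ Hy]]|[p [Sp Hp]]]].
  - left. exists f. split; auto. exact (strict_mono_inj (pair_wo W) W _ f Hmono).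
  - left. apply (card_le_trans _ _ _ Hy). apply card_le_subset. intros x []; auto.
  - exfalso.
    assert (Smax : S (wmax (fst p) (snd p))).
    { destruct (wmax_cases (fst p) (snd p)) as [->| ->]; apply Sp. }
    destruct (Hnomax _ Smax) as [v [Sv Lv]].
    apply (Hsmall v Sv). apply (card_le_trans _ _ _ Hp).
    apply card_le_subset. intros q [_ Lq]. exact (pair_lt_square W p q v Lq Lv).
Qed.

Lemma square_small_below (W : WO) (w : W) : square_small (below w).
Proof.
  induction w as [w IH] using (well_founded_ind (wo_wf W)).
  apply square_small_step; auto.
  intros x y Lx Ly. exact (wo_trans _ _ _ _ Ly Lx).
Qed.

Theorem card_square_le (W : WO) : card_le (all nat) (all W) -> card_le (all (W * W)) (all W).
Proof.
  intros Hn.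
  assert (H : square_small (all W)).
  { apply square_small_step; [intros; exact I|]. intros v _. apply square_small_below. }
  apply (card_le_trans _ (setX (all W) (all W))).
  { apply card_le_subset. intros; split; exact I. }
  destruct H as [H|H]; [exact H|]. exact (card_le_trans _ _ _ H Hn).
Qed.

Lemma card_le_of_lt_succ (M K : WO) (Z : Type) :
  is_succ_card M K -> card_lt (all Z) (all K) -> card_le (all Z) (all M).
Proof.
  intros [_ Hseg] [[i [_ Hi]] HKZ].
  destruct (classic (exists z : Z, True)) as [[z0 _]|NZ].
  2:{ exists (fun z => False_rect M (NZ (ex_intro _ z I))).
      split; intros z; destruct (NZ (ex_intro _ z I)). }
  destruct (equipotent_or_card_le_of_segments K (fun k => exists z, i z = k) _ _ Hseg)
    as [[f [_ [_ Hon]]]|H].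
  - destruct HKZ. apply (card_le_of_surj z0 (all Z) (all K) (fun z => f (i z))).
    intros k _. destruct (Hon k I) as [u [[z <-] <-]]. exists z. split; [exact I|auto].
  - refine (card_le_trans _ _ _ _ H). exists i. split; eauto.
Qed.

Lemma succ_card_pigeonhole (M K : WO) (X : Type) (J : K -> Prop) (g : K -> X) :
  is_succ_card M K -> card_le (all (M * M)) (all M) -> card_le (all X) (all M) ->
  equipotent J (all K) -> exists x, equipotent (fun a => J a /\ g a = x) (all K).
Proof.
  intros [[_ HKM] Hseg] HMM [h [_ Hh]] HJ.
  destruct (inhabited_of_not_card_le HKM) as [k0 _].
  apply NNPP. intros N.
  assert (Hfib : forall x, exists e : K -> M,
             forall a b, J a /\ g a = x -> J b /\ g b = x -> e a = e b -> a = b).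
  { intros x.
    destruct (equipotent_or_card_le_of_segments K (fun a => J a /\ g a = x) _ _ Hseg)
      as [H|[e [_ He]]]; eauto.
    destruct N. eauto. }
  destruct (choice _ Hfib) as [e He].
  apply HKM. apply (card_le_trans _ _ _ (equipotent_card_ge k0 J (all K) HJ)).
  apply (card_le_trans _ (all (M * M))); auto.
  exists (fun a => (h (g a), e (g a) a)). split; [intros; exact I|].
  intros a b Ja Jb E. injection E as E1 E2.
  apply Hh in E1; try exact I. rewrite <- E1 in E2. apply (He (g a)); auto.
Qed.

Lemma succ_card_no_max (T Tp : WO) :
  is_succ_card T Tp -> card_le (all nat) (all T) -> forall y : Tp, exists y', wo_lt y y'.
Proof.
  intros [[HTTp HTpT] Hseg] Hn y. apply NNPP. intros N. apply HTpT.
  apply (card_le_trans _ (below y)); auto.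
  apply card_le_below_max; [exact (card_le_trans _ _ _ Hn HTTp)|exact I|].
  intros x _ L. apply N. eauto.
Qed.

Lemma succ_card_bounded (T Tp : WO) (B : Tp -> Prop) :
  is_succ_card T Tp -> card_le (all nat) (all T) -> card_le B (all T) ->
  exists b, forall z, B z -> wo_lt z b.
Proof.
  intros HTp Hn [h [_ Hh]].
  pose proof (succ_card_no_max T Tp HTp Hn) as Hnomax.
  destruct HTp as [[_ HTpT] Hseg].
  apply NNPP. intros N.
  assert (Hcof : forall y : Tp, exists z, B z /\ wo_lt y z).
  { intros y. destruct (Hnomax y) as [y' Ly].
    apply NNPP. intros N'. apply N. exists y'. intros z Bz.
    destruct (wo_total Tp z y') as [L|[->|L]]; auto; destruct N'; eauto using wo_trans. }
  destruct (choice _ Hcof) as [z Hz].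
  assert (Hseg' : forall k : Tp, exists e : Tp -> T,
             forall a b, below k a -> below k b -> e a = e b -> a = b).
  { intros k. destruct (Hseg k) as [e [_ He]]. eauto. }
  destruct (choice _ Hseg') as [e He].
  apply HTpT. apply (card_le_trans _ (all (T * T))); [|exact (card_square_le T Hn)].
  exists (fun y => (h (z y), e (z y) y)). split; [intros; exact I|].
  intros a b _ _ E. injection E as E1 E2.
  apply Hh in E1; try apply Hz. rewrite <- E1 in E2.
  apply (He (z a)); unfold below; auto; [apply Hz|rewrite E1; apply Hz].
Qed.

Definition constant_subfamily (K Z Bt : WO) : Prop :=
  forall B : K -> Z -> Prop, (forall k, otp_eq Z (B k) Bt) ->
    exists J, equipotent J (all K) /\
      exists k0, J k0 /\ forall k, J k -> forall z, B k z <-> B k0 z.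

Lemma constant_subfamily_of_powerset (M K Z Bt : WO) :
  is_succ_card M K -> card_le (all nat) (all M) -> card_lt (all (Z -> bool)) (all K) ->
  constant_subfamily K Z Bt.
Proof.
  intros HK Hn H2Z B _.
  destruct (inhabited_of_not_card_le (proj2 (proj1 HK))) as [k0 _].
  assert (HZ : card_le (all (Z -> Prop)) (all M)).
  { apply (card_le_trans _ _ _ (card_le_powerset_bool Z)).
    exact (card_le_of_lt_succ M K _ HK H2Z). }
  destruct (succ_card_pigeonhole M K _ (all K) B HK (card_square_le M Hn) HZ
              (equipotent_refl _)) as [P HP].
  exists (fun k => all K k /\ B k = P). split; [exact HP|].
  destruct (equipotent_inhabited _ k0 HP) as [k1 Hk1]. exists k1. split; auto.
  intros k [_ ->] z. rewrite (proj2 Hk1). tauto.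
Qed.

(* Each [B k], of size [T] in [T^+], is bounded below some [b k]; after fixing
   [b k] by pigeonhole, [B k] is coded by a subset of [T], and [2^T < K] allows a
   second pigeonhole. *)
Lemma constant_subfamily_of_bounded (M K T Tp : WO) :
  is_succ_card M K -> is_succ_card T Tp -> card_lt (all T) (all M) ->
  card_le (all nat) (all T) -> card_lt (all (T -> bool)) (all K) ->
  constant_subfamily K Tp T.
Proof.
  intros HK HTp HTM Hn H2T B HB.
  destruct (inhabited_of_not_card_le (proj2 (proj1 HK))) as [k0 _].
  destruct (inhabited_of_not_card_le (proj2 HTM)) as [m0 _].
  assert (HMM : card_le (all (M * M)) (all M)).
  { apply card_square_le. exact (card_le_trans _ _ _ Hn (proj1 HTM)). }
  assert (HTpM : card_le (all Tp) (all M)).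
  { destruct (card_le_or_segment_ge Tp M m0) as [H|[t H]]; auto.
    destruct (proj2 HTM). exact (card_le_trans _ _ _ H (proj2 HTp t)). }
  assert (HPT : card_le (all (T -> Prop)) (all M)).
  { apply (card_le_trans _ _ _ (card_le_powerset_bool T)).
    exact (card_le_of_lt_succ M K _ HK H2T). }
  assert (Hbound : forall k, exists b : Tp, forall z, B k z -> wo_lt z b).
  { intros k. apply (succ_card_bounded T Tp); auto.
    exact (equipotent_card_le _ _ (otp_eq_equipotent _ _ _ (HB k))). }
  destruct (choice _ Hbound) as [b Hb].
  destruct (succ_card_pigeonhole M K _ (all K) b HK HMM HTpM (equipotent_refl _))
    as [b0 Hb0].
  destruct (proj2 HTp b0) as [e [_ He]].
  pose (code := fun k t => exists z, B k z /\ e z = t).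
  destruct (succ_card_pigeonhole M K _ _ code HK HMM HPT Hb0) as [P HP].
  exists (fun k => (all K k /\ b k = b0) /\ code k = P). split; [exact HP|].
  destruct (equipotent_inhabited _ k0 HP) as [k1 Hk1]. exists k1. split; auto.
  assert (Hsub : forall k k', (all K k /\ b k = b0) /\ code k = P ->
                 (all K k' /\ b k' = b0) /\ code k' = P -> forall z, B k z -> B k' z).
  { intros k k' [[_ Ek] Ck] [[_ Ek'] Ck'] z Bz.
    assert (Hc : code k (e z)) by (exists z; auto).
    rewrite Ck, <- Ck' in Hc. destruct Hc as [z' [Bz' Ez']].
    replace z with z'; auto.
    apply He; unfold below; [rewrite <- Ek'|rewrite <- Ek|]; auto. }
  intros k Hk z. split; apply Hsub; auto.
Qed.

Section SteppingUp.

Variables (M T K Z Bt : WO) (Ch : Type) (A : K -> M -> Prop) (z0 : Z).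
Hypotheses (HM : is_cardinal M) (HK : is_succ_card M K) (HA : scattered M T K A)
  (HMn : card_le (all nat) (all M)) (HCh : card_le (all Ch) (all M))
  (Hpol : polarized Z T Bt T Ch) (Hconst : constant_subfamily K Z Bt).

Lemma column_homogeneous (c : M -> Z -> Ch) (k : K) :
  exists (B : Z -> Prop) (a : M -> Prop) (j : Ch),
    otp_eq Z B Bt /\ (forall x, a x -> A k x) /\ equipotent a (all T) /\
    forall x z, a x -> B z -> c x z = j.
Proof.
  destruct HMn as [e _].
  destruct (proj1 HA k) as [F [_ [Finj Fon]]].
  destruct (choice (fun t x => A k x /\ F x = t) (fun t => Fon t I)) as [G HG].
  destruct (Hpol (fun z t => c (G t) z)) as [B [a' [HB [Ha' Hhom]]]].
  assert (Hj : exists j, forall z t, B z -> a' t -> c (G t) z = j).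
  { destruct (classic (exists z t, B z /\ a' t)) as [[z [t [Bz At]]]|N].
    - exists (c (G t) z). intros z' t' Bz' At'. apply Hhom; auto.
    - exists (c (e 0) z0). intros z t Bz At. destruct N. eauto. }
  destruct Hj as [j Hj].
  exists B, (fun x => A k x /\ a' (F x)), j. split; [|split; [|split]]; auto.
  - intros x []; auto.
  - apply (equipotent_trans _ a'); [|exact (otp_eq_equipotent _ _ _ Ha')].
    exists F. split; [|split].
    + intros x []; auto.
    + intros x y [Ax _] [Ay _]. apply Finj; auto.
    + intros t At. destruct (HG t) as [AG FG]. exists (G t). rewrite FG. auto.
  - intros x z [Ax Ax'] Bz.
    replace x with (G (F x)) by (destruct (HG (F x)); apply Finj; auto).
    apply Hj; auto.
Qed.

Theorem polarized_of_scattered : polarized M Z M Bt Ch.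
Proof.
  intros c.
  destruct (inhabited_of_not_card_le (proj2 (proj1 HK))) as [k0 _].
  destruct HMn as [e _].
  destruct (choice (fun k (t : (Z -> Prop) * (M -> Prop) * Ch) =>
              let '(B, a, j) := t in
              otp_eq Z B Bt /\ (forall x, a x -> A k x) /\ equipotent a (all T) /\
              forall x z, a x -> B z -> c x z = j))
    as [col Hcol].
  { intros k. destruct (column_homogeneous c k) as [B [a [j H]]]. exists (B, a, j). exact H. }
  pose (B := fun k => fst (fst (col k))).
  pose (a := fun k => snd (fst (col k))).
  pose (j := fun k => snd (col k)).
  assert (Hk : forall k, otp_eq Z (B k) Bt /\ (forall x, a k x -> A k x) /\
                 equipotent (a k) (all T) /\ forall x z, a k x -> B k z -> c x z = j k).
  { intros k. specialize (Hcol k). unfold B, a, j. destruct (col k) as [[? ?] ?]. exact Hcol. }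
  destruct (Hconst B (fun k => proj1 (Hk k))) as [J [HJ [k1 [Jk1 HB]]]].
  destruct (succ_card_pigeonhole M K Ch J j HK (card_square_le M HMn) HCh HJ)
    as [ch Hch].
  pose (J' := fun k => J k /\ j k = ch).
  assert (HU : equipotent (fun x => exists k, J' k /\ a k x) (all M)).
  { apply (proj2 HA J' a Hch). intros k _. split; apply Hk. }
  exists (fun x => exists k, J' k /\ a k x), (B k1). split; [|split].
  - apply otp_eq_of_card_ge; auto. exact (equipotent_card_ge (e 0) _ _ HU).
  - apply Hk.
  - assert (Hc : forall x z, (exists k, J' k /\ a k x) -> B k1 z -> c x z = ch).
    { intros x z [k [[Jk Ek] Ax]] Bz. rewrite <- Ek.
      apply (proj2 (proj2 (proj2 (Hk k)))); auto. apply (HB k Jk). exact Bz. }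
    intros x z x' z' Hx Hz Hx' Hz'. rewrite (Hc x z), (Hc x' z'); auto.
Qed.

End SteppingUp.

Lemma cf_unbounded (M T : WO) (t1 t2 : T) :
  t1 <> t2 -> is_cf M T -> forall m : M, exists m', wo_lt m m'.
Proof.
  intros Ht [_ Hmin] m. apply NNPP. intros N.
  destruct (Hmin (fun x => x = m)) as [f [Hf Hmono]].
  - intros x. exists m. split; auto. intros L. apply N. eauto.
  - destruct (wo_total T t1 t2) as [L|[E|L]]; [| contradiction |];
      apply Hmono in L; rewrite (Hf t1), (Hf t2) in L; exact (wo_irrefl _ _ L).
Qed.

Lemma cf_infinite (M T : WO) (t1 t2 : T) :
  t1 <> t2 -> is_cf M T -> card_le (all nat) (all T).
Proof.
  intros Ht Hcf. pose proof (cf_unbounded M T t1 t2 Ht Hcf) as HMu.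
  apply (nat_le_of_no_max T t1). intros t.
  destruct (proj1 Hcf) as [C [HC [g [Hg Hon]]]].
  destruct (Hon t) as [x [Cx <-]]. destruct (HMu x) as [x' Lx].
  destruct (HC x') as [y [Cy Ny]]. exists (g y). apply Hg; auto.
  exact (wo_lt_le_trans _ _ _ _ Lx Ny).
Qed.

Theorem claim3p2 (M T K Tp : WO) (Ch : Type) (A : K -> M -> Prop) :
  (* (a) mu > cf(mu) = theta, kappa = mu^+, 2^theta < kappa *)
  is_cardinal M ->
  is_cf M T ->
  card_lt (all T) (all M) ->
  is_succ_card M K ->
  card_lt (all (T -> bool)) (all K) ->
  (* theta^+ *)
  is_succ_card T Tp ->
  (* (b) the family A is mu-scattered *)
  scattered M T K A ->
  (* chi < theta *)
  card_lt (all Ch) (all T) ->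
  ((* (c) *) polarized Tp T T T Ch -> polarized M Tp M T Ch) /\
  (polarized Tp T Tp T Ch -> card_lt (all (Tp -> bool)) (all K) ->
   polarized M Tp M Tp Ch).
Proof.
  intros HM Hcf HTM HK H2T HTp HA HChT.
  destruct (inhabited_of_not_card_le (proj2 HTM)) as [m0 _].
  destruct (inhabited_of_not_card_le (proj2 (proj1 HTp))) as [tp0 _].
  destruct (classic (exists ch : Ch, True)) as [[ch0 _]|NCh].
  2:{ split; intros _; [|intros _]; intros c; destruct NCh; exists (c m0 tp0); exact I. }
  destruct (two_points_of_card_lt ch0 HChT) as [t1 [t2 Ht]].
  pose proof (cf_infinite M T t1 t2 Ht Hcf) as HTn.
  pose proof (card_le_trans _ _ _ HTn (proj1 HTM)) as HMn.
  pose proof (card_le_trans _ _ _ (proj1 HChT) (proj1 HTM)) as HChM.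
  split.
  - intros Hpol. apply (polarized_of_scattered M T K Tp T Ch A tp0); auto.
    exact (constant_subfamily_of_bounded M K T Tp HK HTp HTM HTn H2T).
  - intros Hpol H2Tp. apply (polarized_of_scattered M T K Tp Tp Ch A tp0); auto.
    exact (constant_subfamily_of_powerset M K Tp Tp HK HMn H2Tp).
Qed.
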